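(* Let $\alpha\in(1,2)$ be irrational. Then $\alpha$ has a purely periodic Lehner expansion if and only if $\alpha$ is a quadratic irrational whose Galois conjugate $\bar\alpha$ satisfies $\bar\alpha<1$. Furthermore, if $\alpha=[\![\overline{(a_0,\epsilon_0)(a_1,\epsilon_1)\cdots(a_{r-1},\epsilon_{r-1})}]\!]$, then $\bar\alpha=-\langle\!\langle\overline{(\epsilon_{r-1}/a_{r-1})\cdots(\epsilon_0/a_0)}\rangle\!\rangle$.
   Context: The Lehner map on $[1,2)$ is $L(x)=\frac{1}{2-x}$ for $x\in[1,3/2)$ and $L(x)=\frac{1}{x-1}$ for $x\in[3/2,2)$. For irrational $x\in(1,2)$, its Lehner digits are $(a_i,\epsilon_i)=(2,-1)$ if $L^i(x)\in[1,3/2)$ and $(a_i,\epsilon_i)=(1,+1)$ if $L^i(x)\in[3/2,2)$, and $x=a_0+\cfrac{\epsilon_0}{a_1+\cfrac{\epsilon_1}{a_2+\cdots}}$, written $[\![(a_0,\epsilon_0)(a_1,\epsilon_1)\cdots]\!]$ (the Lehner expansion). For digits $(f_i/b_i)\in\{(-1/2),(+1/1)\}$, $\langle\!\langle(f_0/b_0)(f_1/b_1)\cdots\rangle\!\rangle$ denotes the value of $\cfrac{f_0}{b_0+\cfrac{f_1}{b_1+\cdots}}$; a Lehner digit $(a,\epsilon)$ corresponds to the Farey-type digit $(\epsilon/a)$. An overline denotes infinite periodic repetition of the block; ''purely periodic'' means the digit sequence is periodic from index $0$. *)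

From Stdlib Require Import Reals Lra Lia ZArith Arith.
Open Scope R_scope.

Definition lehner_map (x : R) : R :=
  if Rlt_dec x (3/2) then 1 / (2 - x) else 1 / (x - 1).

Fixpoint lehner_iter (n : nat) (x : R) : R :=
  match n with
  | O => x
  | S k => lehner_map (lehner_iter k x)
  end.

Definition lehner_a (x : R) (i : nat) : R :=
  if Rlt_dec (lehner_iter i x) (3/2) then 2 else 1.
Definition lehner_eps (x : R) (i : nat) : R :=
  if Rlt_dec (lehner_iter i x) (3/2) then -1 else 1.

Definition irrational (x : R) : Prop :=
  forall p q : Z, q <> 0%Z -> x <> IZR p / IZR q.

Definition lehner_purely_periodic (x : R) : Prop :=
  exists r : nat, (0 < r)%nat /\
    forall i : nat, lehner_a x (i + r) = lehner_a x i /\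
                    lehner_eps x (i + r) = lehner_eps x i.

Definition quadratic_irrational (x : R) : Prop :=
  irrational x /\
  exists a b c : Z, a <> 0%Z /\ IZR a * x ^ 2 + IZR b * x + IZR c = 0.

(* beta is the Galois conjugate of x: the other root of an integer quadratic
   a X^2 + b X + c vanishing at x (well defined for irrational x). *)
Definition galois_conj (x beta : R) : Prop :=
  exists a b c : Z, a <> 0%Z /\ IZR a * x ^ 2 + IZR b * x + IZR c = 0 /\
    beta = - (IZR b / IZR a) - x.

(* Finite truncation  f_m/(b_m + f_{m+1}/(b_{m+1} + ... + f_{m+k}/b_{m+k})). *)
Fixpoint cf_aux (f b : nat -> R) (m k : nat) : R :=
  match k with
  | O => f m / b m
  | S k' => f m / (b m + cf_aux f b (S m) k')
  end.

Definition cf_trunc (f b : nat -> R) (n : nat) : R := cf_aux f b 0 n.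

(* Reversed period index: j |-> r-1-(j mod r), giving the sequence
   (r-1),(r-2),...,0,(r-1),... *)
Definition rev_idx (r j : nat) : nat := (r - 1 - Nat.modulo j r)%nat.

From Stdlib Require Import Reals Lra Lia ZArith List Classical.
Open Scope R_scope.

(* A periodic digit sequence fixes the r inverse branches of the Lehner map; each
   contracts distances, by 4/9 on [3/2, 2), which the orbit visits in every period, so
   their composition has alpha as its unique fixed point in (1,2) and alpha is a
   quadratic irrational.  The Lehner map sends a root pair (x, b) of an integer
   quadratic to another such pair with the same discriminant.  If b >= 1, running the
   periodic branches backwards would shrink |x - b| strictly over a period, which is
   absurd.  If b < 1, the conjugates stay below 1, so the quadratics have bounded
   coefficients and the orbit repeats; as the sign of the next conjugate records the
   branch taken, the orbit can be run backwards to alpha.  Finally the reversed digits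
   give Moebius maps h_i with h_i(-x_i) = -x_(i+1) and h_i(-b_i) = -b_(i+1), contracting
   towards the points -b_i at rate (a_i - x_i)^2 < 1, so the reversed expansion
   converges to -beta. *)

Definition rational (x : R) : Prop := exists p q : Z, q <> 0%Z /\ x = IZR p / IZR q.

Lemma irrational_not_rational x : irrational x <-> ~ rational x.
Proof.
  split.
  - intros H [p [q [Hq E]]]. exact (H p q Hq E).
  - intros H p q Hq E. apply H. now exists p, q.
Qed.

Lemma rational_IZR z : rational (IZR z).
Proof. exists z, 1%Z. split; [lia | simpl; field]. Qed.

Lemma rational_plus x y : rational x -> rational y -> rational (x + y).
Proof.
  intros [p [q [Hq ->]]] [p' [q' [Hq' ->]]].
  exists (p * q' + p' * q)%Z, (q * q')%Z. split; [lia|].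
  apply not_0_IZR in Hq, Hq'. rewrite plus_IZR, !mult_IZR. field; auto.
Qed.

Lemma rational_opp x : rational x -> rational (- x).
Proof.
  intros [p [q [Hq ->]]]. exists (- p)%Z, q. split; auto.
  apply not_0_IZR in Hq. rewrite opp_IZR. field; auto.
Qed.

Lemma rational_mult x y : rational x -> rational y -> rational (x * y).
Proof.
  intros [p [q [Hq ->]]] [p' [q' [Hq' ->]]].
  exists (p * p')%Z, (q * q')%Z. split; [lia|].
  apply not_0_IZR in Hq, Hq'. rewrite !mult_IZR. field; auto.
Qed.

Lemma rational_inv x : rational x -> rational (/ x).
Proof.
  intros [p [q [Hq ->]]]. destruct (Z.eq_dec p 0) as [->|Hp].
  - exists 0%Z, 1%Z. split; [lia|]. unfold Rdiv. rewrite Rmult_0_l, Rinv_0. field.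
  - exists q, p. split; auto. apply not_0_IZR in Hq, Hp. field; auto.
Qed.

Lemma rational_minus x y : rational x -> rational y -> rational (x - y).
Proof. intros. apply rational_plus, rational_opp; auto. Qed.

Lemma rational_div x y : rational x -> rational y -> rational (x / y).
Proof. intros. apply rational_mult, rational_inv; auto. Qed.

Lemma irrational_neq_IZR x z : irrational x -> x <> IZR z.
Proof. intros Hx ->. apply irrational_not_rational in Hx. apply Hx, rational_IZR. Qed.

Definition lehner_left (x : R) : bool := if Rlt_dec x (3/2) then true else false.

Definition lehner_piece (l : bool) (y : R) : R :=
  if l then 1 / (2 - y) else 1 / (y - 1).

Definition lehner_piece_inv (l : bool) (y : R) : R :=
  if l then 2 - 1 / y else 1 + 1 / y.

Lemma lehner_left_true x : lehner_left x = true <-> x < 3/2.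
Proof. unfold lehner_left. destruct (Rlt_dec x (3/2)); split; intro; auto; easy. Qed.

Lemma lehner_left_false x : lehner_left x = false <-> 3/2 <= x.
Proof. unfold lehner_left. destruct (Rlt_dec x (3/2)); split; intro; try easy; lra. Qed.

Lemma lehner_map_piece x : lehner_map x = lehner_piece (lehner_left x) x.
Proof. unfold lehner_map, lehner_piece, lehner_left. now destruct (Rlt_dec x (3/2)). Qed.

Lemma lehner_a_left al i :
  lehner_a al i = if lehner_left (lehner_iter i al) then 2 else 1.
Proof. unfold lehner_a, lehner_left. now destruct (Rlt_dec _ _). Qed.

Lemma lehner_eps_left al i :
  lehner_eps al i = if lehner_left (lehner_iter i al) then -1 else 1.
Proof. unfold lehner_eps, lehner_left. now destruct (Rlt_dec _ _). Qed.

Lemma lehner_piece_invK (l : bool) (y : R) :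
  (if l then y <> 2 else y <> 1) -> lehner_piece_inv l (lehner_piece l y) = y.
Proof. intros H. destruct l; unfold lehner_piece_inv, lehner_piece; field; lra. Qed.

Lemma lehner_piece_inv_dist (l : bool) (s t : R) : 0 < s -> 0 < t ->
  Rabs (lehner_piece_inv l s - lehner_piece_inv l t) * (s * t) = Rabs (s - t).
Proof.
  intros Hs Ht.
  assert (E : (lehner_piece_inv l s - lehner_piece_inv l t) * (s * t)
              = if l then s - t else t - s)
    by (destruct l; unfold lehner_piece_inv; field; lra).
  rewrite <- (Rabs_pos_eq (s * t)) by nra. rewrite <- Rabs_mult, E.
  destruct l; auto using Rabs_minus_sym.
Qed.

Lemma lehner_piece_inv_ge1 l y : 1 <= y -> 1 <= lehner_piece_inv l y.
Proof.
  intros H. assert (0 < 1 / y <= 1).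
  { split; [apply Rdiv_lt_0_compat; lra|].
    unfold Rdiv. rewrite Rmult_1_l, <- Rinv_1. apply Rinv_le_contravar; lra. }
  destruct l; unfold lehner_piece_inv; lra.
Qed.

Lemma lehner_map_irrational x : irrational x -> 1 < x < 2 ->
  irrational (lehner_map x) /\ 1 < lehner_map x < 2.
Proof.
  intros Hi Hx. rewrite lehner_map_piece.
  assert (Hinv : lehner_piece_inv (lehner_left x) (lehner_piece (lehner_left x) x) = x)
    by (apply lehner_piece_invK; destruct (lehner_left x); lra).
  split.
  - apply irrational_not_rational. intros Hr. apply irrational_not_rational in Hi.
    apply Hi. rewrite <- Hinv. unfold lehner_piece_inv.
    destruct (lehner_left x); [apply rational_minus | apply rational_plus];
      try apply rational_div; auto; apply rational_IZR.
  - unfold lehner_piece. destruct (lehner_left x) eqn:Hl.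
    + apply lehner_left_true in Hl.
      assert (E : 1 / (2 - x) * (2 - x) = 1) by (field; lra).
      set (y := 1 / (2 - x)) in *. split; nra.
    + apply lehner_left_false in Hl.
      assert (x <> 3/2).
      { intros E. apply irrational_not_rational in Hi. apply Hi. rewrite E.
        apply rational_div; apply rational_IZR. }
      assert (E : 1 / (x - 1) * (x - 1) = 1) by (field; lra).
      set (y := 1 / (x - 1)) in *. split; nra.
Qed.

Lemma lehner_map_inv x : 1 < x < 2 -> x = lehner_piece_inv (lehner_left x) (lehner_map x).
Proof.
  intros Hx. rewrite lehner_map_piece, lehner_piece_invK; auto.
  destruct (lehner_left x); lra.
Qed.

Lemma lehner_iter_irrational al : irrational al -> 1 < al < 2 ->
  forall n, irrational (lehner_iter n al) /\ 1 < lehner_iter n al < 2.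
Proof.
  intros Hi Hx n. induction n as [|n [IHi IHx]]; simpl; auto.
  now apply lehner_map_irrational.
Qed.

Lemma lehner_iter_add i p x : lehner_iter (i + p) x = lehner_iter i (lehner_iter p x).
Proof. induction i; simpl; congruence. Qed.

(** * Quadratic equations along an orbit *)

Definition quad_conj (t : Z * Z * Z) (x b : R) : Prop :=
  let '(A, B, C) := t in
  A <> 0%Z /\ IZR A * x ^ 2 + IZR B * x + IZR C = 0 /\ b = - (IZR B / IZR A) - x.

Lemma galois_conj_quad x b : galois_conj x b <-> exists t, quad_conj t x b.
Proof.
  split.
  - intros [A [B [C H]]]. now exists (A, B, C).
  - intros [[[A B] C] H]. now exists A, B, C.
Qed.

Lemma quad_conj_vieta A B C x b : quad_conj (A, B, C) x b ->
  IZR B = - IZR A * (x + b) /\ IZR C = IZR A * x * b.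
Proof.
  intros [HA [E Hb]]. apply not_0_IZR in HA.
  assert (HB : IZR B = - IZR A * (x + b)) by (subst b; field; auto).
  split; auto. rewrite HB in E. nra.
Qed.

Lemma quad_conj_irrational t x b : quad_conj t x b -> irrational x -> irrational b.
Proof.
  destruct t as [[A B] C]. intros [HA [_ Hb]] Hx.
  rewrite irrational_not_rational in *. intros Hr. apply Hx.
  replace x with (- (IZR B / IZR A) - b) by lra.
  apply rational_minus, Hr. apply rational_opp, rational_div; apply rational_IZR.
Qed.

Lemma quad_conj_neq t x b : quad_conj t x b -> irrational x -> x <> b.
Proof.
  destruct t as [[A B] C]. intros [HA [_ Hb]] Hx Exb.
  apply irrational_not_rational in Hx. apply Hx.
  replace x with (- (IZR B / IZR A) / 2) by lra.
  apply rational_div; [apply rational_opp, rational_div|]; apply rational_IZR.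
Qed.

Lemma quad_conj_unique t t' x b b' :
  quad_conj t x b -> quad_conj t' x b' -> irrational x -> b = b'.
Proof.
  destruct t as [[A B] C], t' as [[A' B'] C']. intros H H' Hx.
  destruct (quad_conj_vieta _ _ _ _ _ H) as [HB HC].
  destruct (quad_conj_vieta _ _ _ _ _ H') as [HB' HC'].
  destruct H as [HA [E _]], H' as [HA' [E' _]]. apply not_0_IZR in HA, HA'.
  assert (Lin : (IZR A' * IZR B - IZR A * IZR B') * x
                + (IZR A' * IZR C - IZR A * IZR C') = 0) by nra.
  destruct (Req_dec (IZR A' * IZR B - IZR A * IZR B') 0) as [Z|NZ].
  - rewrite HB, HB' in Z. apply Rmult_eq_reg_l with (IZR A * IZR A'); [nra|].
    apply Rmult_integral_contrapositive; auto.
  - exfalso. apply irrational_not_rational in Hx. apply Hx.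
    replace x with (- (IZR A' * IZR C - IZR A * IZR C')
                    / (IZR A' * IZR B - IZR A * IZR B')) by (field_simplify_eq; lra).
    apply rational_div; [apply rational_opp|];
      apply rational_minus; apply rational_mult; apply rational_IZR.
Qed.

(* Substitute X = lehner_piece_inv l Y into A X^2 + B X + C and clear the denominator Y^2. *)
Definition quad_step (l : bool) (t : Z * Z * Z) : Z * Z * Z :=
  let '(A, B, C) := t in
  if l then ((4 * A + 2 * B + C)%Z, (- 4 * A - B)%Z, A)
  else ((A + B + C)%Z, (2 * A + B)%Z, A).

Lemma quad_step_conj l t x b : quad_conj t x b ->
  x <> 1 -> x <> 2 -> b <> 1 -> b <> 2 ->
  quad_conj (quad_step l t) (lehner_piece l x) (lehner_piece l b).
Proof.
  destruct t as [[A B] C]. intros H Hx1 Hx2 Hb1 Hb2.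
  destruct (quad_conj_vieta _ _ _ _ _ H) as [HB HC]. destruct H as [HA _].
  apply not_0_IZR in HA.
  destruct l; unfold quad_step, lehner_piece; cbv beta iota zeta.
  - assert (HA' : IZR (4 * A + 2 * B + C) = IZR A * (2 - x) * (2 - b))
      by (rewrite !plus_IZR, !mult_IZR, HB, HC; ring).
    assert (IZR A * (2 - x) * (2 - b) <> 0)
      by (repeat (apply Rmult_integral_contrapositive; split); auto; lra).
    split; [intros Z; apply (f_equal IZR) in Z; lra|].
    rewrite HA', minus_IZR, mult_IZR, HB. split; field; repeat split; lra.
  - assert (HA' : IZR (A + B + C) = IZR A * (1 - x) * (1 - b))
      by (rewrite !plus_IZR, HB, HC; ring).
    assert (IZR A * (1 - x) * (1 - b) <> 0)
      by (repeat (apply Rmult_integral_contrapositive; split); auto; lra).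
    split; [intros Z; apply (f_equal IZR) in Z; lra|].
    rewrite HA', plus_IZR, mult_IZR, HB. split; field; repeat split; lra.
Qed.

Definition quad_disc (t : Z * Z * Z) : Z := let '(A, B, C) := t in (B * B - 4 * A * C)%Z.

Lemma quad_disc_step l t : quad_disc (quad_step l t) = quad_disc t.
Proof. destruct t as [[A B] C]. destruct l; unfold quad_step, quad_disc; cbv beta iota zeta; ring. Qed.

Fixpoint quad_orbit (al : R) (t0 : Z * Z * Z) (n : nat) : Z * Z * Z :=
  match n with
  | O => t0
  | S k => quad_step (lehner_left (lehner_iter k al)) (quad_orbit al t0 k)
  end.

Fixpoint conj_orbit (al b0 : R) (n : nat) : R :=
  match n with
  | O => b0
  | S k => lehner_piece (lehner_left (lehner_iter k al)) (conj_orbit al b0 k)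
  end.

Lemma quad_disc_orbit al t0 n : quad_disc (quad_orbit al t0 n) = quad_disc t0.
Proof. induction n; simpl; auto. now rewrite quad_disc_step. Qed.

Lemma quad_conj_orbit al t0 b0 : irrational al -> 1 < al < 2 -> quad_conj t0 al b0 ->
  forall n, quad_conj (quad_orbit al t0 n) (lehner_iter n al) (conj_orbit al b0 n).
Proof.
  intros Hi Hx H0 n. induction n as [|n IH]; simpl; auto.
  destruct (lehner_iter_irrational al Hi Hx n) as [Hin Hxn].
  pose proof (quad_conj_irrational _ _ _ IH Hin) as Hb.
  rewrite lehner_map_piece.
  apply quad_step_conj; auto; try lra; apply irrational_neq_IZR; auto.
Qed.

Lemma lehner_piece_lt1 l b : b < 1 ->
  lehner_piece l b < 1 /\ (0 < lehner_piece l b <-> l = true).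
Proof.
  intros H. destruct l; unfold lehner_piece.
  - assert (E : 1 / (2 - b) * (2 - b) = 1) by (field; lra).
    set (y := 1 / (2 - b)) in *. repeat split; auto; nra.
  - assert (E : 1 / (b - 1) * (b - 1) = 1) by (field; lra).
    set (y := 1 / (b - 1)) in *. repeat split; try easy; nra.
Qed.

Lemma conj_orbit_lt1 al b0 : b0 < 1 -> forall n, conj_orbit al b0 n < 1.
Proof. intros H n. induction n; simpl; auto. now apply lehner_piece_lt1. Qed.

Lemma lehner_piece_branch_eq l l' b b' : b < 1 -> b' < 1 ->
  lehner_piece l b = lehner_piece l' b' -> l = l'.
Proof.
  intros Hb Hb' E.
  destruct (lehner_piece_lt1 l b Hb) as [_ H], (lehner_piece_lt1 l' b' Hb') as [_ H'].
  rewrite E in H. destruct l, l'; auto.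
  - symmetry. now apply H', H.
  - now apply H, H'.
Qed.

(** * Reduced quadratic irrationals are purely periodic *)

Lemma quad_conj_reduced_bound A B C x b : quad_conj (A, B, C) x b -> 1 < x < 2 -> b < 1 ->
  let D := quad_disc (A, B, C) in
  (Z.abs A <= D /\ Z.abs B <= 2 * D /\ Z.abs C <= 3 * D)%Z.
Proof.
  intros H Hx Hb D. destruct (quad_conj_vieta _ _ _ _ _ H) as [HB HC].
  destruct H as [HA _].
  set (a := Rabs (IZR A)). set (u := (x - 1) * (1 - b)). set (w := x - b).
  assert (Ha : 1 <= a) by (unfold a; rewrite <- abs_IZR; apply IZR_le; lia).
  assert (Hu : 0 < u) by (unfold u; nra).
  assert (Hw0 : 0 < w) by (unfold w; lra).
  (* A + B + C = A (1 - x)(1 - b) is a nonzero integer. *)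
  assert (Hau : 1 <= a * u).
  { assert (ES : IZR (A + B + C) = - IZR A * u) by (rewrite !plus_IZR, HB, HC; unfold u; ring).
    assert (HS : (A + B + C)%Z <> 0%Z).
    { intros Z. apply (f_equal IZR) in Z. rewrite ES in Z. apply not_0_IZR in HA. nra. }
    replace (a * u) with (Rabs (IZR (A + B + C)))
      by (rewrite ES, Rabs_mult, Rabs_Ropp, (Rabs_pos_eq u); unfold a; lra).
    rewrite <- abs_IZR. apply IZR_le. lia. }
  assert (HD : IZR D = (a * w) ^ 2).
  { unfold D, quad_disc, a, w. rewrite minus_IZR, !mult_IZR, HB, HC.
    rewrite Rpow_mult_distr, pow2_abs. ring. }
  assert (Hw : 4 * u <= w ^ 2).
  { pose proof (pow2_ge_0 ((x - 1) - (1 - b))). unfold u, w. nra. }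
  assert (HDa : 4 * a <= IZR D) by (rewrite HD, Rpow_mult_distr; nra).
  assert (Hs : a * w <= IZR D) by (rewrite HD; nra).
  assert (HBa : Rabs (IZR B) <= 2 * IZR D).
  { rewrite HB, Rabs_mult, Rabs_Ropp. fold a.
    assert (Rabs (x + b) <= 2 * x + w) by (apply Rabs_le; unfold w; lra). nra. }
  assert (HCa : Rabs (IZR C) <= 3 * IZR D).
  { rewrite HC, !Rabs_mult, (Rabs_pos_eq x) by lra. fold a.
    assert (Rabs b <= x + w) by (apply Rabs_le; unfold w; lra).
    assert (a * x * Rabs b <= a * x * (x + w)) by (apply Rmult_le_compat_l; [apply Rmult_le_pos|]; lra).
    assert (a * (x * x) <= a * 4) by (apply Rmult_le_compat_l; nra).
    assert (x * (a * w) <= 2 * (a * w)) by (apply Rmult_le_compat_r; nra).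
    nra. }
  assert (HAa : IZR (Z.abs A) <= IZR D) by (rewrite abs_IZR; fold a; lra).
  rewrite <- abs_IZR, <- mult_IZR in HBa, HCa. apply le_IZR in HAa, HBa, HCa. lia.
Qed.

Lemma pigeonhole_list {T : Type} (dec : forall a b : T, {a = b} + {a <> b}) (L : list T) :
  forall f : nat -> T, (forall i, (i <= length L)%nat -> In (f i) L) ->
  exists i j, (i < j <= length L)%nat /\ f i = f j.
Proof.
  induction L as [|x L IH]; intros f Hf.
  - destruct (Hf 0%nat (le_n _)).
  - simpl length in *. set (n := length L) in *.
    destruct (classic (exists j, (j <= n)%nat /\ f j = f (S n))) as [[j [Hj E]]|Hno].
    + exists j, (S n). split; [lia | auto].
    + (* Redirect the values equal to x to f (S n), which is not among the others. *)
      set (g := fun i => if dec (f i) x then f (S n) else f i).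
      assert (Hg : forall i, (i <= n)%nat -> In (g i) L).
      { intros i Hi. unfold g. destruct (dec (f i) x) as [E|NE].
        - destruct (Hf (S n) (le_n _)) as [E2|E2]; auto.
          exfalso. apply Hno. exists i. split; auto. congruence.
        - destruct (Hf i ltac:(lia)) as [E2|E2]; auto. congruence. }
      destruct (IH g Hg) as [i [j [Hij E]]].
      exists i, j. split; [lia|]. unfold g in E.
      destruct (dec (f i) x), (dec (f j) x); try congruence;
        exfalso; apply Hno; [exists j | exists i]; split; try lia; congruence.
Qed.

Definition int_range (K : Z) : list Z :=
  map (fun n => (Z.of_nat n - K)%Z) (seq 0 (Z.to_nat (2 * K + 1))).

Lemma In_int_range K z : (Z.abs z <= K)%Z -> In z (int_range K).
Proof.
  intros H. apply in_map_iff. exists (Z.to_nat (z + K)).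
  split; [rewrite Z2Nat.id; lia | apply in_seq; lia].
Qed.

Definition coef_box (K : Z) : list (Z * Z * Z) :=
  list_prod (list_prod (int_range K) (int_range K)) (int_range K).

Lemma In_coef_box K A B C : (Z.abs A <= K)%Z -> (Z.abs B <= K)%Z -> (Z.abs C <= K)%Z ->
  In (A, B, C) (coef_box K).
Proof. intros. repeat (apply in_prod; auto using In_int_range). Qed.

Lemma Z3_eq_dec : forall s t : Z * Z * Z, {s = t} + {s <> t}.
Proof. decide equality; try apply Z.eq_dec. decide equality; apply Z.eq_dec. Qed.

Lemma quad_conj_same_root t x y b b' : quad_conj t x b -> quad_conj t y b' ->
  b < 1 -> 1 < y -> x = y.
Proof.
  destruct t as [[A B] C]. intros H [_ [E _]] Hb Hy.
  destruct (quad_conj_vieta _ _ _ _ _ H) as [HB HC]. destruct H as [HA _].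
  apply not_0_IZR in HA. rewrite HB, HC in E.
  assert (E2 : IZR A * ((y - x) * (y - b)) = 0) by (rewrite <- E; ring).
  apply Rmult_integral in E2 as [E2|E2]; [easy|].
  apply Rmult_integral in E2 as [E2|E2]; lra.
Qed.

Section Reduced.

Variables (al b0 : R) (t0 : Z * Z * Z).
Hypotheses (al_irr : irrational al) (al_range : 1 < al < 2)
  (al_conj : quad_conj t0 al b0) (b0_lt1 : b0 < 1).

Let orbit_conj := quad_conj_orbit al t0 b0 al_irr al_range al_conj.
Let orbit_range n := proj2 (lehner_iter_irrational al al_irr al_range n).

(* The sign of the next conjugate tells which branch was taken, so a reduced orbit
   can be run backwards. *)
Lemma reduced_orbit_pred_eq p q :
  lehner_iter (S p) al = lehner_iter (S q) al -> lehner_iter p al = lehner_iter q al.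
Proof.
  intros E.
  assert (Eb : conj_orbit al b0 (S p) = conj_orbit al b0 (S q)).
  { apply (quad_conj_unique _ (quad_orbit al t0 (S q)) _ _ _ (orbit_conj (S p))).
    - rewrite E. apply orbit_conj.
    - apply lehner_iter_irrational; auto. }
  assert (El : lehner_left (lehner_iter p al) = lehner_left (lehner_iter q al))
    by (apply (lehner_piece_branch_eq _ _ _ _ (conj_orbit_lt1 al b0 b0_lt1 p)
                 (conj_orbit_lt1 al b0 b0_lt1 q) Eb)).
  rewrite (lehner_map_inv _ (orbit_range p)), (lehner_map_inv _ (orbit_range q)), El.
  simpl in E. now rewrite E.
Qed.

Lemma reduced_orbit_shift_eq i d :
  lehner_iter i al = lehner_iter (i + d) al -> lehner_iter d al = al.
Proof.
  induction i as [|i IH]; intros E; [easy|].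
  apply IH, reduced_orbit_pred_eq, E.
Qed.

Lemma reduced_orbit_returns : exists d, (0 < d)%nat /\ lehner_iter d al = al.
Proof.
  set (K := (3 * quad_disc t0)%Z).
  assert (Hbox : forall i, In (quad_orbit al t0 i) (coef_box K)).
  { intros i. pose proof (orbit_conj i) as Hi.
    destruct (quad_orbit al t0 i) as [[A B] C] eqn:Et.
    destruct (quad_conj_reduced_bound A B C _ _ Hi (orbit_range i)
                (conj_orbit_lt1 al b0 b0_lt1 i)) as [HA [HB HC]].
    unfold K. rewrite <- (quad_disc_orbit al t0 i), Et. apply In_coef_box; lia. }
  destruct (pigeonhole_list Z3_eq_dec _ (quad_orbit al t0) (fun i _ => Hbox i))
    as [i [j [Hij E]]].
  exists (j - i)%nat. split; [lia|].
  apply (reduced_orbit_shift_eq i). replace (i + (j - i))%nat with j by lia.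
  apply (quad_conj_same_root (quad_orbit al t0 i) _ _ (conj_orbit al b0 i)
           (conj_orbit al b0 j)); [apply orbit_conj | rewrite E; apply orbit_conj | |].
  - apply conj_orbit_lt1, b0_lt1.
  - apply orbit_range.
Qed.

End Reduced.

Lemma lehner_iter_return_periodic al d : lehner_iter d al = al ->
  forall i, lehner_a al (i + d) = lehner_a al i /\ lehner_eps al (i + d) = lehner_eps al i.
Proof. intros E i. unfold lehner_a, lehner_eps. now rewrite lehner_iter_add, E. Qed.

Definition left_periodic (r : nat) (y : R) : Prop :=
  forall i, lehner_left (lehner_iter (i + r) y) = lehner_left (lehner_iter i y).

Lemma digits_left_periodic al r :
  (forall i, lehner_a al (i + r) = lehner_a al i /\ lehner_eps al (i + r) = lehner_eps al i) ->
  left_periodic r al.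
Proof.
  intros H i. destruct (H i) as [Ha _]. rewrite !lehner_a_left in Ha.
  destruct (lehner_left (lehner_iter (i + r) al)), (lehner_left (lehner_iter i al));
    auto; lra.
Qed.

Lemma left_periodic_iter r y : left_periodic r y -> left_periodic r (lehner_iter r y).
Proof. intros H i. unfold left_periodic in *. rewrite <- !lehner_iter_add. apply H. Qed.

(* |g s - g t| = |s - t| / (s t) for either inverse branch g. *)
Lemma lehner_map_expanding s t : irrational s -> 1 < s < 2 -> irrational t -> 1 < t < 2 ->
  lehner_left s = lehner_left t ->
  Rabs (s - t) <= Rabs (lehner_map s - lehner_map t) /\
  (3/2 <= lehner_map s -> 3/2 <= lehner_map t ->
   Rabs (s - t) <= 4/9 * Rabs (lehner_map s - lehner_map t)).
Proof.
  intros Hsi Hs Hti Ht El.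
  destruct (lehner_map_irrational s Hsi Hs) as [_ Ls].
  destruct (lehner_map_irrational t Hti Ht) as [_ Lt].
  pose proof (lehner_piece_inv_dist (lehner_left s) (lehner_map s) (lehner_map t)
                ltac:(lra) ltac:(lra)) as G.
  rewrite <- (lehner_map_inv s Hs), El, <- (lehner_map_inv t Ht) in G.
  pose proof (Rabs_pos (s - t)).
  split.
  - assert (1 <= lehner_map s * lehner_map t) by nra. nra.
  - intros H1 H2. assert (9/4 <= lehner_map s * lehner_map t) by nra. nra.
Qed.

Lemma lehner_iter_dist_mono y z : irrational y -> 1 < y < 2 -> irrational z -> 1 < z < 2 ->
  (forall i, lehner_left (lehner_iter i y) = lehner_left (lehner_iter i z)) ->
  forall i d, Rabs (lehner_iter i y - lehner_iter i z) <=
              Rabs (lehner_iter (i + d) y - lehner_iter (i + d) z).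
Proof.
  intros Hyi Hy Hzi Hz El i d. induction d as [|d IH].
  - rewrite Nat.add_0_r. lra.
  - eapply Rle_trans; [exact IH|]. rewrite Nat.add_succ_r. simpl.
    destruct (lehner_iter_irrational y Hyi Hy (i + d)),
             (lehner_iter_irrational z Hzi Hz (i + d)).
    apply lehner_map_expanding; auto.
Qed.

(* On the left branch the orbit moves right by at least (y - 1)^2 per step. *)
Lemma left_periodic_has_right y r : irrational y -> 1 < y < 2 -> left_periodic r y ->
  (0 < r)%nat -> exists j, (j < r)%nat /\ lehner_left (lehner_iter j y) = false.
Proof.
  intros Hyi Hy Hper Hr. apply NNPP. intros Hno.
  assert (Hall : forall n, lehner_left (lehner_iter n y) = true).
  { intros n. induction n as [n IH] using (well_founded_induction lt_wf).
    destruct (lt_dec n r) as [Hn|Hn].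
    - destruct (lehner_left (lehner_iter n y)) eqn:E; auto.
      exfalso. apply Hno. now exists n.
    - replace n with ((n - r) + r)%nat by lia. rewrite Hper. apply IH. lia. }
  set (delta := (y - 1) ^ 2). assert (Hd : 0 < delta) by (apply pow_lt; lra).
  assert (Grow : forall n, y + INR n * delta <= lehner_iter n y).
  { induction n as [|n IH]; [simpl; lra|].
    rewrite S_INR. simpl lehner_iter. rewrite lehner_map_piece, Hall. unfold lehner_piece.
    destruct (lehner_iter_irrational y Hyi Hy n) as [_ Hn].
    set (z := lehner_iter n y) in *.
    assert (E : 1 / (2 - z) * (2 - z) = 1) by (field; lra).
    set (z' := 1 / (2 - z)) in *.
    assert ((z' - z) * (2 - z) = (z - 1) ^ 2) by nra.
    assert (0 <= INR n * delta) by (apply Rmult_le_pos; [apply pos_INR | lra]).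
    assert (delta <= (z - 1) ^ 2) by (unfold delta; simpl; nra).
    nra. }
  destruct (INR_unbounded (1 / delta)) as [n Hn].
  specialize (Grow n). destruct (lehner_iter_irrational y Hyi Hy n).
  assert (1 / delta * delta = 1) by (field; lra).
  nra.
Qed.

Lemma left_periodic_contract y r : irrational y -> 1 < y < 2 -> left_periodic r y ->
  (0 < r)%nat ->
  Rabs (y - lehner_iter r y) <=
  4/9 * Rabs (lehner_iter r y - lehner_iter r (lehner_iter r y)).
Proof.
  intros Hyi Hy Hp Hr. set (z := lehner_iter r y).
  destruct (lehner_iter_irrational y Hyi Hy r) as [Hzi Hz]. fold z in Hzi, Hz.
  assert (El : forall i, lehner_left (lehner_iter i y) = lehner_left (lehner_iter i z)).
  { intros i. unfold z. rewrite <- lehner_iter_add. symmetry. apply Hp. }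
  destruct (left_periodic_has_right y r Hyi Hy Hp Hr) as [j [Hj Ej]].
  set (k := match j with O => r | _ => j end).
  assert (Hk : (1 <= k <= r)%nat) by (unfold k; destruct j; lia).
  assert (Ek : lehner_left (lehner_iter k y) = false)
    by (unfold k; destruct j; auto; rewrite <- Ej; apply (Hp 0%nat)).
  assert (Ekz : lehner_left (lehner_iter k z) = false) by (rewrite <- El; auto).
  apply lehner_left_false in Ek, Ekz.
  pose proof (lehner_iter_dist_mono y z Hyi Hy Hzi Hz El 0 (k - 1)) as M1.
  pose proof (lehner_iter_dist_mono y z Hyi Hy Hzi Hz El k (r - k)) as M2.
  replace (k + (r - k))%nat with r in M2 by lia.
  destruct (lehner_iter_irrational y Hyi Hy (k - 1)),
           (lehner_iter_irrational z Hzi Hz (k - 1)).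
  destruct (lehner_map_expanding (lehner_iter (k - 1) y) (lehner_iter (k - 1) z))
    as [_ S2]; auto.
  replace k with (S (k - 1)) in Ek, Ekz, M2 by lia. simpl in Ek, Ekz, M2.
  specialize (S2 Ek Ekz). simpl in M1. fold z in M2. lra.
Qed.

Lemma left_periodic_fixed y r : irrational y -> 1 < y < 2 -> left_periodic r y ->
  (0 < r)%nat -> lehner_iter r y = y.
Proof.
  intros Hyi Hy Hp Hr.
  assert (Hm : forall m z, irrational z -> 1 < z < 2 -> left_periodic r z ->
            Rabs (z - lehner_iter r z) <= (4/9) ^ m).
  { induction m as [|m IH]; intros z Hzi Hz Hzp;
      destruct (lehner_iter_irrational z Hzi Hz r) as [Hri Hrz].
    - simpl. apply Rabs_le. lra.
    - eapply Rle_trans; [apply left_periodic_contract; auto|].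
      specialize (IH _ Hri Hrz (left_periodic_iter r z Hzp)). simpl. lra. }
  destruct (Req_dec (lehner_iter r y) y) as [E|NE]; auto. exfalso.
  assert (Hd : 0 < Rabs (y - lehner_iter r y)) by (apply Rabs_pos_lt; lra).
  destruct (pow_lt_1_zero (4/9) ltac:(rewrite Rabs_pos_eq; lra) _ Hd) as [N HN].
  specialize (HN N (le_n _)). specialize (Hm N y Hyi Hy Hp).
  rewrite Rabs_pos_eq in HN by (apply pow_le; lra). lra.
Qed.

Fixpoint lehner_convergents (al : R) (n : nat) : Z * Z * Z * Z :=
  match n with
  | O => (1, 0, 0, 1)%Z
  | S k => let '(p, p', q, q') := lehner_convergents al k in
           if lehner_left (lehner_iter k al) then (p * 2 + p', - p, q * 2 + q', - q)%Z
           else (p + p', p, q + q', q)%Z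
  end.

(* al = (p y + p') / (q y + q') with y = lehner_iter n al; the invariant q + q' > 0
   keeps q >= 0 through the left branch. *)
Lemma lehner_convergents_spec al : irrational al -> 1 < al < 2 -> forall n,
  let '(p, p', q, q') := lehner_convergents al n in
  al * (IZR q * lehner_iter n al + IZR q') = IZR p * lehner_iter n al + IZR p' /\
  (0 <= q)%Z /\ (0 < q + q')%Z /\ ((0 < n)%nat -> (0 < q)%Z).
Proof.
  intros Hi Hx n. induction n as [|n IH]; [simpl; split; [ring | lia]|].
  simpl lehner_convergents. destruct (lehner_convergents al n) as [[[p p'] q] q'].
  destruct IH as [E [H1 [H2 _]]].
  destruct (lehner_iter_irrational al Hi Hx n) as [_ Hxn].
  destruct (lehner_iter_irrational al Hi Hx (S n)) as [_ Hy].
  pose proof (lehner_map_inv _ Hxn) as Hb. simpl lehner_iter in Hy |- *.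
  set (x := lehner_iter n al) in *. set (y := lehner_map x) in *.
  assert (Ey : al * (IZR q * (x * y) + IZR q' * y) = IZR p * (x * y) + IZR p' * y)
    by (transitivity (al * (IZR q * x + IZR q') * y); [ring | rewrite E; ring]).
  destruct (lehner_left x); unfold lehner_piece_inv in Hb; (split; [|lia]).
  - assert (K : x * y = 2 * y - 1) by (rewrite Hb; field; lra).
    rewrite K in Ey. rewrite !plus_IZR, !mult_IZR, !opp_IZR. lra.
  - assert (K : x * y = y + 1) by (rewrite Hb; field; lra).
    rewrite K in Ey. rewrite !plus_IZR. lra.
Qed.

Lemma left_periodic_quadratic al r : irrational al -> 1 < al < 2 -> left_periodic r al ->
  (0 < r)%nat -> quadratic_irrational al.
Proof.
  intros Hi Hx Hp Hr. split; auto.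
  pose proof (lehner_convergents_spec al Hi Hx r) as M.
  rewrite (left_periodic_fixed al r Hi Hx Hp Hr) in M.
  destruct (lehner_convergents al r) as [[[p p'] q] q'].
  destruct M as [E [_ [_ Hq]]]. specialize (Hq Hr).
  exists q, (q' - p)%Z, (- p')%Z. split; [lia|].
  rewrite minus_IZR, opp_IZR. simpl. nra.
Qed.

(** * The reversed expansion *)

Definition digit_mobius (al : R) (i : nat) (t : R) : R := lehner_eps al i / (lehner_a al i + t).

Lemma digit_mobius_gt al i t : -1 < t -> -1 < digit_mobius al i t.
Proof.
  intros H. unfold digit_mobius. rewrite lehner_a_left, lehner_eps_left.
  destruct (lehner_left _).
  - assert (E : -1 / (2 + t) * (2 + t) = -1) by (field; lra).
    set (z := -1 / (2 + t)) in *. nra.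
  - assert (E : 1 / (1 + t) * (1 + t) = 1) by (field; lra).
    set (z := 1 / (1 + t)) in *. nra.
Qed.

Definition rev_tail (al : R) (r m k : nat) : R :=
  cf_aux (fun j => lehner_eps al (rev_idx r j)) (fun j => lehner_a al (rev_idx r j)) m k.

Lemma rev_tail_0 al r m : rev_tail al r m 0 = digit_mobius al (rev_idx r m) 0.
Proof. unfold rev_tail, digit_mobius. simpl. now rewrite Rplus_0_r. Qed.

Lemma rev_tail_S al r m k :
  rev_tail al r m (S k) = digit_mobius al (rev_idx r m) (rev_tail al r (S m) k).
Proof. reflexivity. Qed.

Lemma rev_tail_gt al r m k : -1 < rev_tail al r m k.
Proof.
  revert m. induction k as [|k IH]; intros m.
  - rewrite rev_tail_0. apply digit_mobius_gt. lra.
  - rewrite rev_tail_S. now apply digit_mobius_gt.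
Qed.

Lemma rev_idx_succ r m : (0 < r)%nat ->
  S (rev_idx r (S m)) = rev_idx r m \/ (rev_idx r m = 0 /\ rev_idx r (S m) = r - 1)%nat.
Proof.
  intros Hr. unfold rev_idx.
  pose proof (Nat.div_mod m r ltac:(lia)) as Dm.
  pose proof (Nat.mod_upper_bound m r ltac:(lia)) as Um.
  destruct (Nat.eq_dec (m mod r) (r - 1)) as [Eu|Nu].
  - right. assert (E : (S m mod r = 0)%nat)
      by (symmetry; apply (Nat.mod_unique _ _ (S (m / r))); lia).
    rewrite E. lia.
  - left. assert (E : (S m mod r = S (m mod r))%nat)
      by (symmetry; apply (Nat.mod_unique _ _ (m / r)); lia).
    rewrite E. lia.
Qed.

Definition conj_gap (al beta : R) (n : nat) (t : R) : R :=
  (t + conj_orbit al beta n)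
  / ((t + lehner_iter n al) * (lehner_iter n al - conj_orbit al beta n)).

Definition gap_rate (al : R) (i : nat) : R := (lehner_a al i - lehner_iter i al) ^ 2.

Lemma finite_argmax (f : nat -> R) n : (0 < n)%nat ->
  exists j, (j < n)%nat /\ forall i, (i < n)%nat -> f i <= f j.
Proof.
  induction n as [|n IH]; intros Hn; [lia|].
  destruct (Nat.eq_dec n 0) as [->|Hn0].
  - exists 0%nat. split; [lia|]. intros i Hi. replace i with 0%nat by lia. lra.
  - destruct (IH ltac:(lia)) as [j [Hj Hmax]].
    destruct (Rle_dec (f n) (f j)) as [Hle|Hlt].
    + exists j. split; [lia|]. intros i Hi.
      destruct (Nat.eq_dec i n) as [->|]; [lra | apply Hmax; lia].
    + exists n. split; [lia|]. intros i Hi.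
      destruct (Nat.eq_dec i n) as [->|]; [lra|]. specialize (Hmax i ltac:(lia)). lra.
Qed.

Lemma conj_gap_small x b t d : 0 < t + x -> b < x ->
  Rabs ((t + b) / ((t + x) * (x - b))) <= d -> d * (x - b) <= 1/2 ->
  Rabs (t + b) <= 2 * d * (x - b) ^ 2.
Proof.
  intros Htx Hbx Hrho Hd. set (rho := (t + b) / ((t + x) * (x - b))) in *.
  assert (E : (t + b) * (1 - rho * (x - b)) = rho * (x - b) ^ 2)
    by (unfold rho; field; lra).
  assert (Hr : Rabs (rho * (x - b)) <= 1/2)
    by (rewrite Rabs_mult, (Rabs_pos_eq (x - b)) by lra; nra).
  assert (H1 : 1/2 <= Rabs (1 - rho * (x - b))).
  { pose proof (Rabs_triang_inv 1 (rho * (x - b))). rewrite Rabs_R1 in H. lra. }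
  apply (f_equal Rabs) in E.
  rewrite !Rabs_mult, (Rabs_pos_eq ((x - b) ^ 2)) in E by apply pow2_ge_0.
  pose proof (Rabs_pos (t + b)). pose proof (pow2_ge_0 (x - b)). nra.
Qed.

Section Periodic.

Variables (al beta : R) (t0 : Z * Z * Z) (r : nat).
Hypotheses (al_irr : irrational al) (al_range : 1 < al < 2) (al_per : left_periodic r al)
  (r_pos : (0 < r)%nat) (al_conj : quad_conj t0 al beta).

Notation x n := (lehner_iter n al).
Notation b n := (conj_orbit al beta n).

Let orbit_conj := quad_conj_orbit al t0 beta al_irr al_range al_conj.
Let orbit_range n := proj2 (lehner_iter_irrational al al_irr al_range n).
Let orbit_return := left_periodic_fixed al r al_irr al_range al_per r_pos.

Lemma conj_orbit_return : b r = beta.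
Proof.
  apply (quad_conj_unique (quad_orbit al t0 r) t0 al); auto.
  pose proof (orbit_conj r) as H. now rewrite orbit_return in H.
Qed.

Lemma conj_orbit_inv n : b n = lehner_piece_inv (lehner_left (x n)) (b (S n)).
Proof.
  assert (Hb : irrational (b n))
    by (apply (quad_conj_irrational _ _ _ (orbit_conj n)), lehner_iter_irrational; auto).
  simpl. rewrite lehner_piece_invK; auto.
  destruct (lehner_left _); apply irrational_neq_IZR; auto.
Qed.

(* If beta >= 1, all conjugates of one period are >= 1, so |x n - b n| strictly
   increases over the period although x r = x 0 and b r = b 0. *)
Lemma periodic_conj_lt1 : beta < 1.
Proof.
  destruct (Rlt_or_le beta 1) as [Hb|Hb]; auto. exfalso.
  set (d n := Rabs (x n - b n)).
  assert (Hge1 : forall k, (k <= r)%nat -> 1 <= b (r - k)).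
  { induction k as [|k IH]; intros Hk.
    - rewrite Nat.sub_0_r, conj_orbit_return. auto.
    - rewrite conj_orbit_inv. apply lehner_piece_inv_ge1.
      replace (S (r - S k)) with (r - k)%nat by lia. apply IH. lia. }
  assert (Hstep : forall i, (i < r)%nat -> d i < d (S i)).
  { intros i Hi.
    assert (Hb1 : 1 <= b (S i))
      by (replace (S i) with (r - (r - S i))%nat by lia; apply Hge1; lia).
    pose proof (orbit_range (S i)) as Hx1.
    pose proof (lehner_piece_inv_dist (lehner_left (x i)) (x (S i)) (b (S i))
                  ltac:(lra) ltac:(lra)) as G.
    rewrite <- conj_orbit_inv in G. simpl in G. rewrite <- (lehner_map_inv _ (orbit_range i)) in G.
    assert (0 < d (S i)).
    { apply Rabs_pos_lt, Rminus_eq_contra, (quad_conj_neq _ _ _ (orbit_conj (S i))).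
      apply lehner_iter_irrational; auto. }
    assert (1 < x (S i) * b (S i)) by nra.
    unfold d in *. pose proof (Rabs_pos (x i - b i)). simpl in *. nra. }
  assert (Hmono : forall i, (i <= r)%nat -> d 0%nat <= d i).
  { induction i as [|i IH]; intros Hi; [lra|].
    pose proof (Hstep i ltac:(lia)). specialize (IH ltac:(lia)). lra. }
  pose proof (Hmono (r - 1)%nat ltac:(lia)). pose proof (Hstep (r - 1)%nat ltac:(lia)).
  replace (S (r - 1)) with r in H0 by lia.
  unfold d in *. rewrite orbit_return, conj_orbit_return in H0. simpl in *. lra.
Qed.

Let conj_lt1 := conj_orbit_lt1 al beta periodic_conj_lt1.

(* digit_mobius al i maps -x i to -x (S i) and -b i to -b (S i); conj_gap n t is a
   normalised cross-ratio of t against -b n and -x n, which the Möbius map multiplies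
   by its derivative ratio (a_i - x_i)^2. *)
Lemma conj_gap_step i t : -1 < t ->
  Rabs (conj_gap al beta (S i) (digit_mobius al i t)) = gap_rate al i * Rabs (conj_gap al beta i t).
Proof.
  intros Ht. pose proof (conj_lt1 i) as Hb. pose proof (orbit_range i) as Hx.
  unfold conj_gap, gap_rate, digit_mobius. rewrite lehner_a_left, lehner_eps_left.
  simpl conj_orbit. simpl lehner_iter. rewrite lehner_map_piece.
  set (y := x i) in *. set (c := b i) in *.
  rewrite <- (Rabs_pos_eq (_ ^ 2)) by apply pow2_ge_0. rewrite <- Rabs_mult.
  destruct (lehner_left y); unfold lehner_piece.
  - f_equal. field. repeat split; lra.
  - rewrite <- Rabs_Ropp. f_equal. field. repeat split; lra.
Qed.

Lemma gap_rate_lt1 i : 0 <= gap_rate al i < 1.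
Proof.
  pose proof (orbit_range i) as Hx. pose proof (lehner_left_true (x i)).
  pose proof (lehner_left_false (x i)).
  unfold gap_rate. rewrite lehner_a_left. destruct (lehner_left (x i)); split; nra.
Qed.

Lemma conj_gap_rev_succ m t :
  conj_gap al beta (S (rev_idx r (S m))) t = conj_gap al beta (rev_idx r m) t.
Proof.
  destruct (rev_idx_succ r m r_pos) as [->|[-> ->]]; auto.
  replace (S (r - 1)) with r by lia. unfold conj_gap.
  now rewrite orbit_return, conj_orbit_return.
Qed.

Lemma rev_tail_gap_bound : exists theta K, 0 <= theta < 1 /\ 0 <= K /\ forall m k,
  Rabs (conj_gap al beta (S (rev_idx r m)) (rev_tail al r m k)) <= theta ^ S k * K.
Proof.
  destruct (finite_argmax (gap_rate al) r r_pos) as [j [_ Hj]].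
  destruct (finite_argmax (fun i => Rabs (conj_gap al beta i 0)) r r_pos) as [j' [_ Hj']].
  set (K := Rabs (conj_gap al beta j' 0)) in *.
  exists (gap_rate al j), K. split; [apply gap_rate_lt1|]. split; [apply Rabs_pos|].
  assert (Hrev : forall m, (rev_idx r m < r)%nat) by (intros; unfold rev_idx; lia).
  intros m k. revert m. induction k as [|k IH]; intros m;
    pose proof (gap_rate_lt1 (rev_idx r m)); pose proof (gap_rate_lt1 j);
    pose proof (Hj _ (Hrev m)).
  - rewrite rev_tail_0, conj_gap_step by lra. pose proof (Hj' _ (Hrev m)).
    pose proof (Rabs_pos (conj_gap al beta (rev_idx r m) 0)). simpl. nra.
  - rewrite rev_tail_S, conj_gap_step by apply rev_tail_gt.
    rewrite <- conj_gap_rev_succ. specialize (IH (S m)).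
    pose proof (Rabs_pos (conj_gap al beta (S (rev_idx r (S m))) (rev_tail al r (S m) k))).
    pose proof (pow_le (gap_rate al j) (S k) ltac:(lra)).
    change (gap_rate al j ^ S (S k)) with (gap_rate al j * gap_rate al j ^ S k). nra.
Qed.

Lemma reversed_expansion_cv :
  Un_cv (cf_trunc (fun j => lehner_eps al (rev_idx r j))
                  (fun j => lehner_a al (rev_idx r j))) (- beta).
Proof.
  destruct rev_tail_gap_bound as [theta [K [Htheta [HK Hbound]]]].
  assert (Hc : beta < al) by (pose proof periodic_conj_lt1; lra).
  set (c := al - beta).
  intros eps Heps.
  set (d := Rmin (eps / (4 * c ^ 2)) (1 / (2 * c))).
  assert (Hd : 0 < d) by (apply Rmin_pos; apply Rdiv_lt_0_compat; unfold c; nra).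
  destruct (pow_lt_1_zero theta ltac:(rewrite Rabs_pos_eq; lra) (d / (K + 1))
              ltac:(apply Rdiv_lt_0_compat; lra)) as [N HN].
  exists N. intros n Hn. unfold R_dist. replace (_ - - beta) with (rev_tail al r 0 n + beta)
    by (unfold rev_tail, cf_trunc; ring).
  specialize (Hbound 0%nat n). specialize (HN (S n) ltac:(lia)).
  rewrite Rabs_pos_eq in HN by (apply pow_le; lra).
  assert (Hgap : theta ^ S n * K <= d).
  { apply Rmult_lt_compat_r with (r := K + 1) in HN; [|lra].
    unfold Rdiv in HN. rewrite Rmult_assoc, Rinv_l, Rmult_1_r in HN by lra.
    pose proof (pow_le theta (S n) ltac:(lra)). nra. }
  replace (S (rev_idx r 0)) with r in Hbound by (unfold rev_idx; rewrite Nat.Div0.mod_0_l; lia).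
  unfold conj_gap in Hbound. rewrite orbit_return, conj_orbit_return in Hbound.
  eapply Rle_lt_trans.
  - apply (conj_gap_small al beta); [pose proof (rev_tail_gt al r 0 n); lra | lra | | ].
    + eapply Rle_trans; [apply Hbound | apply Hgap].
    + fold c. assert (d <= 1 / (2 * c)) by apply Rmin_r.
      apply Rmult_le_compat_r with (r := c) in H; [|unfold c; lra].
      replace (1 / (2 * c) * c) with (1/2) in H by (field; unfold c; lra). exact H.
  - fold c. assert (d <= eps / (4 * c ^ 2)) by apply Rmin_l.
    apply Rmult_le_compat_r with (r := 2 * c ^ 2) in H; [|nra].
    replace (eps / (4 * c ^ 2) * (2 * c ^ 2)) with (eps / 2) in H by (field; unfold c; lra).
    lra.
Qed.

End Periodic.

Theorem proposition6p2 (alpha : R) :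
  1 < alpha -> alpha < 2 -> irrational alpha ->
  (lehner_purely_periodic alpha <->
     (quadratic_irrational alpha /\
      forall beta, galois_conj alpha beta -> beta < 1))
  /\
  (forall r : nat, (0 < r)%nat ->
     (forall i : nat, lehner_a alpha (i + r) = lehner_a alpha i /\
                      lehner_eps alpha (i + r) = lehner_eps alpha i) ->
     forall beta, galois_conj alpha beta ->
       Un_cv (cf_trunc (fun j => lehner_eps alpha (rev_idx r j))
                       (fun j => lehner_a alpha (rev_idx r j)))
             (- beta)).
Proof.
  intros H1 H2 Hi. assert (Hx : 1 < alpha < 2) by lra. split; [split|].
  - intros [r [Hr Hd]]. apply digits_left_periodic in Hd. split.
    + exact (left_periodic_quadratic alpha r Hi Hx Hd Hr).
    + intros beta [t Ht]%galois_conj_quad.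
      exact (periodic_conj_lt1 alpha beta t r Hi Hx Hd Hr Ht).
  - intros [[_ [A [B [C [HA Hq]]]]] Hconj].
    set (b0 := - (IZR B / IZR A) - alpha).
    assert (Ht : quad_conj (A, B, C) alpha b0) by (repeat split; auto).
    assert (Hb0 : b0 < 1) by (apply Hconj, galois_conj_quad; now exists (A, B, C)).
    destruct (reduced_orbit_returns alpha b0 (A, B, C) Hi Hx Ht Hb0) as [d [Hd E]].
    exists d. split; auto. now apply lehner_iter_return_periodic.
  - intros r Hr Hd beta [t Ht]%galois_conj_quad.
    exact (reversed_expansion_cv alpha beta t r Hi Hx (digits_left_periodic alpha r Hd) Hr Ht).
Qed.
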